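(* Let $(\Omega,\mathscr{F},\mu)$ be a complete probability space, $K\subset L^{0}(\mu)$ absolutely convex, closed in probability and bounded in probability, and $E_K=\mathrm{span}(K)$. Let $\tau$ be an equicontinuous Köthe topology on $E_K$ with the Krein-Šmulian property, induced by $F\subset E'_K$. Then for every $g\in F$ the linear map $E_K\ni f\mapsto\int_\Omega fg\,d\mu$ is $\tau$-continuous.
   Context: $L^{0}(\mu)$ carries the topology of convergence in probability. The polar of $C\subset L^{0}(\mu)$ is $C^{\circ}=\{g\in L^{0}(\mu):\sup_{f\in C}\int_\Omega|fg|\,d\mu\leq1\}$; set $E'_K=\mathrm{span}(K^{\circ})$, paired with $E_K$ via $\langle f,g\rangle=\int_\Omega fg\,d\mu$; for $F\subset E'_K$, $\sigma(E_K,F)$ is the associated weak topology on $E_K$. A set is $K$-bounded if it is contained in $\lambda K$ for some $\lambda>0$. A topology $\tau$ on $E_K$ is an equicontinuous Köthe topology if $K$ is $\tau$-compact and $\tau$ restricted to $K$-bounded sets equals $\sigma(E_K,F)$ for some $F\subset E'_K$ that is solid, separates the points of $E_K$, and contains a strictly positive element; $F$ is then said to induce $\tau$. Such $\tau$ has the Krein-Šmulian property if a convex set $C\subset E_K$ is $\tau$-closed if and only if $C\cap\lambda K$ is $\tau$-closed for each $\lambda>0$. *)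

From Stdlib Require List.
From HB Require Import structures.
From mathcomp Require Import all_boot all_order all_algebra.
From mathcomp Require Import all_classical all_reals all_analysis.
Set Implicit Arguments. Unset Strict Implicit. Unset Printing Implicit Defensive.
Import Order.TTheory GRing.Theory Num.Theory.
Import numFieldNormedType.Exports.
Local Open Scope classical_set_scope.
Local Open Scope ring_scope.

(* Elements of L^0(mu) are represented by measurable functions T -> R; all
   notions below are invariant under a.e. equality. *)

Section Koethe.
Context {d : measure_display} {T : measurableType d} {R : realType}.
Variable mu : probability T R.

Definition L0 : set (T -> R) := [set f | measurable_fun setT f].

Definition ae_eqf (f h : T -> R) : Prop := {ae mu, forall x, f x = h x}.

Definition pairing (f g : T -> R) : R := Rintegral mu setT (fun x => f x * g x).

Definition cvg_in_prob (u : nat -> T -> R) (f : T -> R) : Prop :=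
  forall eps : R, 0 < eps ->
    (fun n => mu [set x | (eps <= `|u n x - f x|)%R]) @ \oo --> 0%E.

Definition closed_in_prob (K : set (T -> R)) : Prop :=
  forall (u : nat -> T -> R) (f : T -> R),
    (forall n, K (u n)) -> L0 f -> cvg_in_prob u f -> K f.

Definition bounded_in_prob (K : set (T -> R)) : Prop :=
  forall eps : R, 0 < eps -> exists c : R, 0 < c /\
    forall f, K f -> (mu [set x | (c < `|f x|)%R] <= eps%:E)%E.

Definition absolutely_convex (K : set (T -> R)) : Prop :=
  forall f h a b, K f -> K h -> `|a| + `|b| <= 1 ->
    K (fun x => a * f x + b * h x).

Definition convex_set (C : set (T -> R)) : Prop :=
  forall f h (t : R), C f -> C h -> 0 <= t <= 1 ->
    C (fun x => t * f x + (1 - t) * h x).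

Definition lspan (K : set (T -> R)) : set (T -> R) :=
  [set f | exists (s : seq ((T -> R) * R)),
     (forall p, p \in s -> K p.1) /\
     f = (fun x => \sum_(p <- s) p.2 * p.1 x)].

Definition polar (C : set (T -> R)) : set (T -> R) :=
  [set g | L0 g /\ forall f, C f ->
     (\int[mu]_x (`|f x * g x|)%:E <= 1)%E].

Definition dual_space (K : set (T -> R)) : set (T -> R) := lspan (polar K).

Definition scale_set (l : R) (K : set (T -> R)) : set (T -> R) :=
  [set f | exists h, K h /\ f = (fun x => l * h x)].

Definition K_bounded (K B : set (T -> R)) : Prop :=
  exists l : R, 0 < l /\ B `<=` scale_set l K.

Definition is_topology_on (E : set (T -> R)) (tau : set (set (T -> R))) : Prop :=
  [/\ tau set0, tau E,
      (forall U, tau U -> U `<=` E),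
      (forall (I : Type) (U : I -> set (T -> R)),
          (forall i, tau (U i)) -> tau (\bigcup_i U i)) &
      (forall U V, tau U -> tau V -> tau (U `&` V))].

(* open sets are unions of a.e.-classes: tau is a topology on the quotient *)
Definition ae_saturated (E A : set (T -> R)) : Prop :=
  forall f h, A f -> E h -> ae_eqf f h -> A h.

Definition closed_in (E : set (T -> R)) (tau : set (set (T -> R))) C : Prop :=
  C `<=` E /\ tau (E `\` C).

Definition compact_in (tau : set (set (T -> R))) (K : set (T -> R)) : Prop :=
  forall (I : Type) (U : I -> set (T -> R)),
    (forall i, tau (U i)) -> K `<=` \bigcup_i U i ->
    exists s : seq I, K `<=` \bigcup_(i in [set i | List.In i s]) U i.

Definition weak_topology (E F : set (T -> R)) : set (set (T -> R)) :=
  [set V | V `<=` E /\ forall f, V f ->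
     exists (s : seq (T -> R)) (eps : R),
       (forall g, g \in s -> F g) /\ 0 < eps /\
       [set h | E h /\ forall g, g \in s -> `|pairing h g - pairing f g| < eps]
         `<=` V].

Definition same_trace (tau1 tau2 : set (set (T -> R))) (B : set (T -> R)) : Prop :=
  forall V, (exists U, tau1 U /\ V = U `&` B) <-> (exists U, tau2 U /\ V = U `&` B).

Definition solid (F : set (T -> R)) : Prop :=
  forall g h, F g -> L0 h -> {ae mu, forall x, `|h x| <= `|g x|} -> F h.

Definition separates_points (E F : set (T -> R)) : Prop :=
  forall f1 f2, E f1 -> E f2 -> ~ ae_eqf f1 f2 ->
    exists g, F g /\ pairing f1 g != pairing f2 g.

Definition has_strictly_positive (F : set (T -> R)) : Prop :=
  exists g, F g /\ {ae mu, forall x, 0 < g x}.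

Definition equicontinuous_Koethe_topology (K : set (T -> R))
    (tau : set (set (T -> R))) (F : set (T -> R)) : Prop :=
  [/\ compact_in tau K,
      [/\ F `<=` dual_space K, solid F, separates_points (lspan K) F &
        has_strictly_positive F] &
      forall B, B `<=` lspan K -> K_bounded K B ->
        same_trace tau (weak_topology (lspan K) F) B].

Definition Krein_Smulian (K : set (T -> R)) (tau : set (set (T -> R))) : Prop :=
  forall C, C `<=` lspan K -> ae_saturated (lspan K) C -> convex_set C ->
    (closed_in (lspan K) tau C <->
     forall l : R, 0 < l -> closed_in (lspan K) tau (C `&` scale_set l K)).

Definition continuous_on (E : set (T -> R)) (tau : set (set (T -> R)))
    (phi : (T -> R) -> R) : Prop :=
  forall V : set R, open V -> tau [set f | E f /\ V (phi f)].

End Koethe.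

From Pilot Require Import Defs.
From HB Require Import structures.
From mathcomp Require Import all_boot all_order all_algebra.
From mathcomp Require Import all_classical all_reals all_analysis.
From mathcomp Require Import measurable_realfun ring lra.
Import Order.TTheory GRing.Theory Num.Theory.
Import numFieldNormedType.Exports.
Local Open Scope classical_set_scope.
Local Open Scope ring_scope.
Set Implicit Arguments. Unset Strict Implicit. Unset Printing Implicit Defensive.

(* For g in F and c real, the half-space {f : <f,g> <= c} is convex and
   a.e.-saturated, so by the Krein-Smulian property it is tau-closed as soon as
   its traces on the sets lK are.  These traces are sigma(E_K,F)-closed: the
   half-space is, and so is lK, since K is tau-compact and tau agrees with
   sigma(E_K,F) on K, so K is sigma(E_K,F)-compact, while F separates points
   and lK is closed under a.e. equality (K is closed in probability).  A
   K-bounded sigma(E_K,F)-closed set is tau-closed, because each f in E_K lies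
   in a multiple of K containing the set, where the two topologies agree.
   Applied to g and to -g, which lies in F as F is solid, this makes the
   preimages of open half-lines under f |-> <f,g> tau-open. *)

Section LinearSpan.
Context {d : measure_display} {T : measurableType d} {R : realType}.
Implicit Types (S : set (T -> R)) (f h : T -> R).

Lemma sub_lspan S : S `<=` lspan S.
Proof.
move=> k Sk; exists [:: (k, 1)]; split; first by move=> p; rewrite inE => /eqP ->.
by apply: funext => x; rewrite big_seq1 mul1r.
Qed.

Lemma lspanZ S a f : lspan S f -> lspan S (fun x => a * f x).
Proof.
move=> [s [Ss ->]]; exists [seq (p.1, a * p.2) | p <- s]; split.
  by move=> p /mapP [q qs ->] /=; apply: Ss.
by apply: funext => x; rewrite big_map mulr_sumr; apply: eq_bigr => p _; rewrite mulrA.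
Qed.

Lemma lspanD S f h : lspan S f -> lspan S h -> lspan S (fun x => f x + h x).
Proof.
move=> [s [Ss ->]] [t [St ->]]; exists (s ++ t); split.
  by move=> p; rewrite mem_cat => /orP [/Ss|/St].
by apply: funext => x; rewrite big_cat.
Qed.

Lemma lspan_L0 S : S `<=` L0 -> lspan S `<=` L0.
Proof.
move=> SL0 _ [s [Ss ->]]; rewrite /L0 /=.
under eq_fun do rewrite big_seq_cond big_mkcond.
apply: measurable_sum => p; have [ps|_] := boolP (p \in s); last exact: measurable_cst.
by apply: measurable_funM; [exact: measurable_cst | exact/SL0/Ss].
Qed.

End LinearSpan.

Section Pairing.
Context {d : measure_display} {T : measurableType d} {R : realType}.
Variable mu : probability T R.
Implicit Types (S : set (T -> R)) (f g h k : T -> R).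

Definition integrable_product f g :=
  mu.-integrable setT (EFin \o (fun x => f x * g x)).

Lemma integrable_product_lspanl S g :
  (forall k, S k -> integrable_product k g) ->
  forall f, lspan S f -> integrable_product f g.
Proof.
move=> Sg _ [s [Ss ->]].
have : mu.-integrable setT
    (fun x => \sum_(p <- s | p \in s) (p.2%:E * (p.1 x * g x)%:E)%E).
  apply: (integrable_sum measurableT) => p ps.
  by apply: (integrableZl measurableT); exact/Sg/Ss.
apply: eq_integrable => // x _ /=.
rewrite -big_seq mulr_suml -sumEFin.
by apply: eq_bigr => p _; rewrite -EFinM mulrA.
Qed.

Lemma integrable_product_lspan S1 S2 :
  (forall k h, S1 k -> S2 h -> integrable_product k h) ->
  forall f g, lspan S1 f -> lspan S2 g -> integrable_product f g.
Proof.
have productC f g : integrable_product f g -> integrable_product g f.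
  by apply: eq_integrable => // x _ /=; rewrite mulrC.
move=> S12 f g S1f S2g; apply: (integrable_product_lspanl _ S1f) => k S1k.
apply/productC/(integrable_product_lspanl _ S2g) => h S2h.
exact/productC/S12.
Qed.

Lemma integrable_product_polar K k g :
  K `<=` L0 -> K k -> polar mu K g -> integrable_product k g.
Proof.
move=> KL0 Kk [L0g Kg]; apply/integrableP; split.
  by apply/measurable_EFinP; apply: measurable_funM => //; exact: KL0.
exact: le_lt_trans (Kg _ Kk) (ltry 1).
Qed.

Lemma pairingZl a f g : integrable_product f g ->
  pairing mu (fun x => a * f x) g = a * pairing mu f g.
Proof.
by move=> fg; rewrite /pairing -RintegralZl //; apply: eq_Rintegral => x _; rewrite mulrA.
Qed.

Lemma pairing_comb a b f h g : integrable_product f g -> integrable_product h g ->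
  pairing mu (fun x => a * f x + b * h x) g = a * pairing mu f g + b * pairing mu h g.
Proof.
move=> fg hg; rewrite -!pairingZl // /pairing -RintegralD //.
- by apply: eq_Rintegral => x _; rewrite mulrDl.
- apply: eq_integrable (integrableZl measurableT a fg) => // x _ /=.
  by rewrite -EFinM mulrA.
- apply: eq_integrable (integrableZl measurableT b hg) => // x _ /=.
  by rewrite -EFinM mulrA.
Qed.

Lemma pairingNr f g : integrable_product f g ->
  pairing mu f (fun x => - g x) = - pairing mu f g.
Proof.
move=> fg; rewrite -mulN1r -pairingZl // /pairing.
by apply: eq_Rintegral => x _; rewrite mulrN mulN1r mulNr.
Qed.

Lemma pairing_ae_eq f h g : L0 f -> L0 h -> L0 g -> ae_eqf mu f h ->
  pairing mu f g = pairing mu h g.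
Proof.
move=> mf mh mg fh; rewrite /pairing /Rintegral; congr fine.
apply: ae_eq_integral => //; try by apply/measurable_EFinP; apply: measurable_funM.
by apply: filterS fh => x /= ->.
Qed.

End Pairing.

Section AbsolutelyConvex.
Context {d : measure_display} {T : measurableType d} {R : realType}.
Variable K : set (T -> R).
Hypothesis acK : absolutely_convex K.

Lemma absolutely_convexZ a k : K k -> `|a| <= 1 -> K (fun x => a * k x).
Proof.
move=> Kk a1; have := acK (a := a) (b := 0) Kk Kk; rewrite normr0 addr0 => /(_ a1).
by under eq_fun do rewrite mul0r addr0.
Qed.

Lemma scale_set_le l m : 0 < l -> l <= m -> scale_set l K `<=` scale_set m K.
Proof.
move=> l0 lm _ [k [Kk ->]]; have m0 : 0 < m := lt_le_trans l0 lm.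
exists (fun x => l / m * k x); split.
  apply: absolutely_convexZ => //.
  by rewrite ger0_norm ?ler_pdivrMr ?mul1r // divr_ge0 // ltW.
by apply: funext => x; rewrite mulrA mulrCA divff ?mulr1 // gt_eqF.
Qed.

Lemma scale_set_lspan m : scale_set m K `<=` lspan K.
Proof. by move=> _ [k [Kk ->]]; apply/lspanZ/sub_lspan. Qed.

Lemma lspan_absorbed k0 f : K k0 -> lspan K f -> exists2 m, 0 < m & scale_set m K f.
Proof.
move=> Kk0 [s [Ss ->]].
have normS_gt0 (t : seq ((T -> R) * R)) : 0 < 1 + \sum_(p <- t) `|p.2|.
  by rewrite ltr_pwDl // sumr_ge0.
exists (1 + \sum_(p <- s) `|p.2|) => //.
elim: s Ss => [|[k a] s IHs] Ss.
  exists (fun x => 0 * k0 x); split; first by apply: absolutely_convexZ; rewrite ?normr0.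
  by apply: funext => x; rewrite !big_nil !mul0r mulr0.
have Kk : K k by apply: (Ss (k, a)); rewrite mem_head.
have [h [Kh sh]] :
    scale_set (1 + \sum_(p <- s) `|p.2|) K (fun x => \sum_(p <- s) p.2 * p.1 x).
  by apply: IHs => p ps; apply: Ss; rewrite in_cons ps orbT.
set m := 1 + \sum_(p <- s) `|p.2|.
have m0 : 0 < m := normS_gt0 s.
have m'E : 1 + \sum_(p <- (k, a) :: s) `|p.2| = `|a| + m by rewrite big_cons /m; ring.
rewrite m'E; have m'0 : 0 < `|a| + m by rewrite -m'E.
exists (fun x => a / (`|a| + m) * k x + m / (`|a| + m) * h x); split.
  apply: acK => //; rewrite !normrM normfV (ger0_norm (ltW m0)) (ger0_norm (ltW m'0)).
  by rewrite -mulrDl divff ?gt_eqF.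
apply: funext => x; rewrite big_cons /= (congr1 (fun F => F x) sh) -/m.
by field; rewrite gt_eqF.
Qed.

End AbsolutelyConvex.

Section ClosedInProbability.
Context {d : measure_display} {T : measurableType d} {R : realType}.
Variables (mu : probability T R) (K : set (T -> R)).
Hypotheses (complete : measure_is_complete mu) (cK : closed_in_prob mu K).

Lemma closed_in_prob_ae_eq k f : K k -> L0 f -> ae_eqf mu k f -> K f.
Proof.
move=> Kk mf [N [mN N0 kfN]]; apply: (cK (u := fun _ => k)) => // eps eps0.
suff -> : (fun _ : nat => mu [set x | eps <= `|k x - f x|]) = (fun=> 0%E).
  exact: cvg_cst.
apply: funext => _; have badN : [set x | eps <= `|k x - f x|] `<=` N.
  move=> x /= epsx; apply: kfN => /= kfx.
  by move: epsx; rewrite kfx subrr normr0 leNgt eps0.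
apply/eqP; rewrite eq_le measure_ge0 andbT -N0 le_measure // inE //.
by apply: complete; exists N.
Qed.

Lemma scale_set_ae_eq l k f : 0 < l -> K k -> L0 f ->
  ae_eqf mu (fun x => l * k x) f -> scale_set l K f.
Proof.
move=> l0 Kk mf lkf; exists (fun x => l^-1 * f x); split.
  apply: (closed_in_prob_ae_eq Kk).
    by apply: measurable_funM => //; exact: measurable_cst.
  by apply: filterS lkf => x /= <-; rewrite mulrA mulVf ?mul1r // gt_eqF.
by apply: funext => x; rewrite mulrA divff ?mul1r // gt_eqF.
Qed.

End ClosedInProbability.

Lemma ball_scale (R : realType) (l x y e : R) :
  0 < l -> ball x (e / l) y -> ball (l * x) e (l * y).
Proof.
move=> l0; rewrite -!ball_normE /ball_ /= -mulrBr normrM gtr0_norm //.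
by rewrite ltr_pdivlMr // mulrC.
Qed.

Lemma setD_halfspace (U : Type) (R : realType) (A : set U) (phi : U -> R) c :
  A `\` [set u | A u /\ phi u <= c] = [set u | A u /\ c < phi u].
Proof.
apply/seteqP; split => u /=.
  by move=> [Au nle]; split => //; rewrite ltNge; apply/negP => le; apply: nle.
by move=> [Au lt]; split => // -[_]; rewrite leNgt lt.
Qed.

Section TopologyOn.
Context {d : measure_display} {T : measurableType d} {R : realType}.
Variables (E : set (T -> R)) (tau : set (set (T -> R))).
Hypothesis topo : is_topology_on E tau.

Lemma topology_locally_open A :
  (forall f, A f -> exists U, tau U /\ U f /\ U `<=` A) -> tau A.
Proof.
case: topo => _ _ _ tau_bigcup _ Aloc.
have [U UA] := choice (fun f : {f | A f} => Aloc _ (projT2 f)).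
suff -> : A = \bigcup_i U i by apply: tau_bigcup => i; case: (UA i).
apply/seteqP; split => [f Af|f [[h Ah] _]].
  by exists (exist _ f Af) => //; case: (UA (exist _ f Af)) => _ [].
by have [_ [_]] := UA (exist _ h Ah); apply.
Qed.

Lemma continuous_on_halflines (phi : (T -> R) -> R) :
  (forall c, tau [set f | E f /\ c < phi f]) ->
  (forall c, tau [set f | E f /\ phi f < c]) -> continuous_on E tau phi.
Proof.
move=> tau_gt tau_lt V oV; apply: topology_locally_open => f [Ef Vf].
have /nbhs_ballP [e e0 eV] : nbhs (phi f) V by apply: open_nbhs_nbhs.
exists ([set h | E h /\ phi f - e < phi h] `&` [set h | E h /\ phi h < phi f + e]).
split; first by case: topo => _ _ _ _ tauI; apply: tauI.
split; first by split; split; rewrite // ?ltrBlDr ltrDl.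
move=> h [[Eh gt] [_ lt]]; split => //; apply: eV.
by rewrite -ball_normE /ball_ /= ltr_norml; apply/andP; split; lra.
Qed.

End TopologyOn.

Section WeakTopology.
Context {d : measure_display} {T : measurableType d} {R : realType}.
Variables (mu : probability T R) (E F : set (T -> R)).
Local Notation weak := (weak_topology mu E F).

Lemma weak_topology_local A : A `<=` E ->
  (forall f, A f -> exists W, weak W /\ W f /\ W `<=` A) -> weak A.
Proof.
move=> AE Aloc; split => // f /Aloc [W [[_ Wnbhs] [Wf WA]]].
have [s [eps [sF [eps0 sW]]]] := Wnbhs f Wf.
by exists s, eps; split => //; split => //; apply: subset_trans sW WA.
Qed.

Lemma weak_topology_full : weak E.
Proof. by split => // f Ef; exists [::], 1; split => //; split => // h []. Qed.

Lemma weak_topologyI V1 V2 : weak V1 -> weak V2 -> weak (V1 `&` V2).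
Proof.
move=> [V1E wV1] [_ wV2]; split; first by move=> f [/V1E].
move=> f [/wV1 [s1 [e1 [s1F [e10 sV1]]]] /wV2 [s2 [e2 [s2F [e20 sV2]]]]].
exists (s1 ++ s2), (Order.min e1 e2); split.
  by move=> g; rewrite mem_cat => /orP [/s1F|/s2F].
split; first by rewrite lt_min e10 e20.
move=> h [Eh near_h]; split; [apply: sV1 | apply: sV2]; split => // g gs;
  apply: lt_le_trans (near_h g _) _; rewrite ?mem_cat ?gs ?orbT // ge_min lexx ?orbT //.
Qed.

Lemma weak_topologyU V1 V2 : weak V1 -> weak V2 -> weak (V1 `|` V2).
Proof.
move=> wV1 wV2; apply: weak_topology_local.
  by move=> f [/wV1.1|/wV2.1].
move=> f [V1f|V2f]; [exists V1 | exists V2]; do 2 split => //; move=> h; by [left|right].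
Qed.

Lemma weak_topology_bigI (I : Type) (Q : I -> (T -> R) -> Prop) (s : seq I) :
  (forall i, weak [set h | E h /\ Q i h]) ->
  weak [set h | E h /\ forall i, List.In i s -> Q i h].
Proof.
move=> wQ; elim: s => [|i s IHs].
  suff -> : [set h | E h /\ forall i, List.In i [::] -> Q i h] = E.
    exact: weak_topology_full.
  by apply/seteqP; split => h; [case|split].
suff -> : [set h | E h /\ forall j, List.In j (i :: s) -> Q j h] =
    [set h | E h /\ Q i h] `&` [set h | E h /\ forall j, List.In j s -> Q j h].
  exact: weak_topologyI.
apply/seteqP; split => h /=.
  move=> [Eh Qh]; split; split => //; first by apply: Qh; left.
  by move=> j js; apply: Qh; right.
by move=> [[Eh Qih] [_ Qh]]; split => // j [<-|/Qh].
Qed.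

Lemma weak_topology_preimage g (P : set R) : F g -> open P ->
  weak [set h | E h /\ P (pairing mu h g)].
Proof.
move=> Fg oP; split => [h []//|f [Ef Pf]].
have /nbhs_ballP [e e0 eP] : nbhs (pairing mu f g) P by apply: open_nbhs_nbhs.
exists [:: g], e; split; first by move=> g'; rewrite inE => /eqP ->.
split => // h [Eh hf]; split => //; apply: eP.
by rewrite -ball_normE /ball_ /= distrC; apply: hf; rewrite mem_head.
Qed.

Lemma weak_closedI A B : closed_in E weak A -> closed_in E weak B ->
  closed_in E weak (A `&` B).
Proof.
move=> [AE wA] [_ wB]; split; first by apply: subset_trans AE; exact: subIsetl.
by rewrite setDIr; exact: weak_topologyU.
Qed.

Lemma weak_compact tau K : compact_in tau K -> same_trace tau weak K ->
  compact_in weak K.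
Proof.
move=> cK trK I W wW KW.
have trW i : exists U, tau U /\ W i `&` K = U `&` K by apply/trK; exists (W i).
have [U UW] := choice trW.
have [s sU] : exists s : seq I, K `<=` \bigcup_(i in [set i | List.In i s]) U i.
  apply: cK => [i|k Kk]; first exact: (UW i).1.
  have [i _ Wik] := KW k Kk; exists i => //.
  by have [] : (U i `&` K) k by rewrite -(UW i).2.
exists s => k Kk; have [i si Uik] := sU k Kk; exists i => //.
by have [] : (W i `&` K) k by rewrite (UW i).2.
Qed.

End WeakTopology.

Section KoetheDual.
Context {d : measure_display} {T : measurableType d} {R : realType}.
Variables (mu : probability T R) (K : set (T -> R)).
Variables (tau : set (set (T -> R))) (F : set (T -> R)).
Hypotheses (complete : measure_is_complete mu) (KL0 : K `<=` L0).
Hypotheses (acK : absolutely_convex K) (cK : closed_in_prob mu K).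
Hypotheses (topo : is_topology_on (lspan K) tau).
Hypothesis koethe : equicontinuous_Koethe_topology mu K tau F.

Local Notation E := (lspan K).
Local Notation weak := (weak_topology mu E F).
Local Notation p := (pairing mu).

Lemma koethe_L0 : F `<=` L0.
Proof. by case: koethe => _ [FE _ _ _] _ g /FE; apply: lspan_L0 => h []. Qed.

Lemma integrable_product_koethe f g : E f -> F g -> integrable_product mu f g.
Proof.
case: koethe => _ [FE _ _ _] _ Ef /FE Fg.
by apply: (integrable_product_lspan _ Ef Fg) => k h Kk; exact: integrable_product_polar.
Qed.

Lemma weak_compact_K : compact_in weak K.
Proof.
case: koethe => cpt _ trace; apply: weak_compact cpt _.
apply: trace; first exact: sub_lspan.
by exists 1; split => // k Kk; exists k; split => //; apply: funext => x; rewrite mul1r.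
Qed.

Lemma scale_set_weak_separated l f : 0 < l -> E f -> ~ scale_set l K f ->
  exists W, weak W /\ W f /\ W `<=` E `\` scale_set l K.
Proof.
move=> l0 Ef nlKf; case: koethe => _ [_ _ sepF _] _.
have sep (k : {k | K k}) : exists g, F g /\ l * p (sval k) g != p f g.
  case: k => k Kk /=; have lkE : E (fun x => l * k x) by exact/lspanZ/sub_lspan.
  have nae : ~ ae_eqf mu (fun x => l * k x) f.
    by move=> lkf; apply/nlKf/(scale_set_ae_eq complete cK l0 Kk (lspan_L0 KL0 Ef)).
  have [g [Fg neq]] := sepF _ _ lkE Ef nae.
  exists g; split => //.
  by rewrite -pairingZl //; apply: integrable_product_koethe => //; exact: sub_lspan.
(* Each k in K gets a sigma-neighbourhood on which some g in F keeps l k away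
   from f; finitely many of them cover K. *)
have [g gP] := choice sep.
pose r i := `|l * p (sval i) (g i) - p f (g i)| / 2.
have r0 i : 0 < r i by rewrite divr_gt0 // normr_gt0 subr_eq0; exact: (gP i).2.
pose O i := [set h | E h /\ ball (p (sval i) (g i)) (r i / l) (p h (g i))].
have [s sO] : exists s, K `<=` \bigcup_(i in [set i | List.In i s]) O i.
  apply: (weak_compact_K (U := O)) => [i|k Kk].
    exact/weak_topology_preimage/ball_open/(gP i).1.
  by exists (exist _ k Kk) => //; split; [exact: sub_lspan | apply/ballxx/divr_gt0].
exists [set h | E h /\ forall i, List.In i s -> ball (p f (g i)) (r i) (p h (g i))].
split.
  by apply: weak_topology_bigI => i; apply/weak_topology_preimage/ball_open/(gP i).1.
split; first by split => // i _; exact: ballxx.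
move=> h [Eh near_f]; split => // -[k [Kk hE]].
have [i si [_ near_i]] := sO k Kk.
move: (near_f i si); rewrite hE pairingZl; last first.
  by apply: integrable_product_koethe; [exact: sub_lspan | exact: (gP i).1].
move=> /(ball_splitl (ball_scale l0 near_i)).
by rewrite -ball_normE /ball_ /= ltxx.
Qed.

Lemma scale_set_weak_closed l : 0 < l -> closed_in E weak (scale_set l K).
Proof.
move=> l0; split; first exact: scale_set_lspan.
apply: weak_topology_local; first by move=> f [].
by move=> f [Ef nlKf]; exact: scale_set_weak_separated.
Qed.

Lemma halfspace_weak_closed g c : F g -> closed_in E weak [set h | E h /\ p h g <= c].
Proof.
move=> Fg; split; first by move=> h [].
by rewrite setD_halfspace; exact: (weak_topology_preimage _ _ Fg (@open_gt _ c)).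
Qed.

Lemma halfspace_convex g c : F g -> Defs.convex_set [set h | E h /\ p h g <= c].
Proof.
move=> Fg f h t [Ef fc] [Eh hc] /andP [t0 t1].
split; first by apply: lspanD; apply: lspanZ.
rewrite pairing_comb ?integrable_product_koethe //.
apply: le_trans (lerD (ler_wpM2l t0 fc) (ler_wpM2l _ hc)) _; first by rewrite subr_ge0.
by rewrite -mulrDl subrKC mul1r.
Qed.

Lemma halfspace_ae_saturated g c : F g ->
  ae_saturated mu E [set h | E h /\ p h g <= c].
Proof.
move=> Fg f h [Ef fc] Eh fh; split => //.
by rewrite -(pairing_ae_eq (lspan_L0 KL0 Ef) (lspan_L0 KL0 Eh) (koethe_L0 Fg) fh).
Qed.

Lemma tau_closed_weak_closed l A : 0 < l -> A `<=` scale_set l K ->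
  closed_in E weak A -> closed_in E tau A.
Proof.
move=> l0 AlK [AE wA]; split => //; apply: (topology_locally_open topo) => f [Ef nAf].
have [[k0 Kk0]|noK] := pselect (exists k0, K k0); last first.
  exists E; split; first by case: topo.
  by split => // h Eh; split => // /AlK [k [Kk _]]; apply: noK; exists k.
have [m m0 mKf] := lspan_absorbed acK Kk0 Ef.
pose B := scale_set (m + l) K.
have lKB : scale_set l K `<=` B by apply: scale_set_le; rewrite ?lerDr ?ltW.
have [U [tauU UB]] : exists U, tau U /\ (E `\` A) `&` B = U `&` B.
  case: koethe => _ _ trace; apply/trace; last by exists (E `\` A).
  - exact: scale_set_lspan.
  - by exists (m + l); split => //; rewrite addr_gt0.
have fB : B f by apply: scale_set_le mKf; rewrite ?lerDl ?ltW.
exists U; split => //; split.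
  by have [] // : (U `&` B) f by rewrite -UB.
move=> h Uh; split; first by case: topo => _ _ /(_ U tauU) UE _ _; exact: UE.
move=> Ah; have [[_ nAh] _] : ((E `\` A) `&` B) h.
  by rewrite UB; split => //; exact/lKB/AlK.
by apply: nAh.
Qed.

Hypothesis KS : Krein_Smulian mu K tau.

Lemma tau_open_pairing_gt g c : F g -> tau [set h | E h /\ c < p h g].
Proof.
move=> Fg; have [_] : closed_in E tau [set h | E h /\ p h g <= c].
  apply/KS; first by move=> h [].
  - exact: halfspace_ae_saturated.
  - exact: halfspace_convex.
  move=> l l0; apply: (tau_closed_weak_closed l0); first exact: subIsetr.
  by apply: weak_closedI; [exact: halfspace_weak_closed | exact: scale_set_weak_closed].
by rewrite setD_halfspace.
Qed.

Lemma tau_open_pairing_lt g c : F g -> tau [set h | E h /\ p h g < c].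
Proof.
move=> Fg; have Fng : F (fun x => - g x).
  case: koethe => _ [_ solidF _ _] _; apply: (solidF g) => //.
    exact/measurable_funN/koethe_L0.
  by apply: aeW => x; rewrite normrN.
suff -> : [set h | E h /\ p h g < c] = [set h | E h /\ - c < p h (fun x => - g x)].
  exact: tau_open_pairing_gt.
apply/seteqP; split => h [Eh hc]; split => //; move: hc;
  by rewrite pairingNr ?ltrN2 //; exact: integrable_product_koethe.
Qed.

End KoetheDual.

Unset Implicit Arguments.

Theorem lemma5p1 (d : measure_display) (T : measurableType d) (R : realType)
  (mu : probability T R) (K : set (T -> R))
  (tau : set (set (T -> R))) (F : set (T -> R)) :
  measure_is_complete mu ->
  K `<=` L0 ->
  absolutely_convex K ->
  closed_in_prob mu K ->
  bounded_in_prob mu K ->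
  is_topology_on (lspan K) tau ->
  (forall U, tau U -> ae_saturated mu (lspan K) U) ->
  equicontinuous_Koethe_topology mu K tau F ->
  Krein_Smulian mu K tau ->
  forall g, F g -> continuous_on (lspan K) tau (fun f => pairing mu f g).
Proof.
move=> complete KL0 acK cK _ topo _ koethe KS g Fg.
apply: (continuous_on_halflines topo) => c.
  exact: (tau_open_pairing_gt complete KL0 acK cK topo koethe KS).
exact: (tau_open_pairing_lt complete KL0 acK cK topo koethe KS).
Qed.
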